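(* Let $A_1,\dots,A_m\in\mathbb{S}^n$, $b\in\mathbb{R}^m$, $C\in\mathbb{S}^n$, and let Assumption 1 hold for some $p\ge n$. Then every second-order critical point $Y\in\mathcal{M}_p$ of (P) is globally optimal for (P), and $X=YY^\top$ is globally optimal for (SDP).
   Context: $\mathbb{S}^n$: real symmetric $n\times n$ matrices; $\langle U,V\rangle=\operatorname{tr}(U^\top V)$. $\mathcal{A}(X)_i=\langle A_i,X\rangle$, $\mathcal{A}^*(\nu)=\sum_i\nu_iA_i$. (SDP): minimize $\langle C,X\rangle$ over $\{X\in\mathbb{S}^n:\mathcal{A}(X)=b,\ X\succeq0\}$. $\mathcal{M}_p=\{Y\in\mathbb{R}^{n\times p}:\mathcal{A}(YY^\top)=b\}$; (P): minimize $\langle CY,Y\rangle$ over $\mathcal{M}_p$. Assumption 1 (for $p$ with $\mathcal{M}_p\ne\emptyset$): either (a) $A_1Y,\dots,A_mY$ are linearly independent for all $Y\in\mathcal{M}_p$, or (b) $\operatorname{span}\{A_1Y,\dots,A_mY\}$ has constant dimension on an open neighborhood of $\mathcal{M}_p$. For $Y\in\mathcal{M}_p$: $T_Y=\{\dot Y:\langle A_iY,\dot Y\rangle=0\ \forall i\}$; $G_{ij}=\langle A_iY,A_jY\rangle$, $\mu=G^\dagger\mathcal{A}(CYY^\top)$, $S(Y)=C-\mathcal{A}^*(\mu)$. $Y$ is second-order critical if $S(Y)Y=0$ and $\langle\dot Y,S(Y)\dot Y\rangle\ge0$ for all $\dot Y\in T_Y$. *)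

From HB Require Import structures.
From mathcomp Require Import all_boot all_order all_algebra.
From mathcomp Require Import all_classical all_reals all_analysis.
Set Implicit Arguments. Unset Strict Implicit. Unset Printing Implicit Defensive.
Import Order.TTheory GRing.Theory Num.Theory.
Import numFieldNormedType.Exports.
Local Open Scope ring_scope.
Local Open Scope classical_set_scope.

Section BM.
Variables (R : realType) (n m : nat).

Definition frob (q : nat) (U V : 'M[R]_(n, q)) : R := \tr (U^T *m V).

Definition symmx (X : 'M[R]_n) : Prop := X^T = X.
Definition psdmx (X : 'M[R]_n) : Prop :=
  symmx X /\ forall v : 'cV[R]_n, 0 <= (v^T *m X *m v) 0 0.

Definition Aop (A : 'I_m -> 'M[R]_n) (X : 'M[R]_n) : 'cV[R]_m :=
  \col_i frob (A i) X.
Definition Aadj (A : 'I_m -> 'M[R]_n) (nu : 'cV[R]_m) : 'M[R]_n :=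
  \sum_i nu i 0 *: A i.

Definition sdp_feasible (A : 'I_m -> 'M[R]_n) (b : 'cV[R]_m) (X : 'M[R]_n) :=
  symmx X /\ Aop A X = b /\ psdmx X.
Definition sdp_optimal A b (C : 'M[R]_n) (X : 'M[R]_n) :=
  sdp_feasible A b X /\
  forall X', sdp_feasible A b X' -> frob C X <= frob C X'.

Definition Mp (A : 'I_m -> 'M[R]_n) (b : 'cV[R]_m) (p : nat) : set 'M[R]_(n, p) :=
  [set Y | Aop A (Y *m Y^T) = b].
Definition P_optimal A b (C : 'M[R]_n) (p : nat) (Y : 'M[R]_(n, p)) :=
  @Mp A b p Y /\
  forall Y', @Mp A b p Y' -> frob (C *m Y) Y <= frob (C *m Y') Y'.

Definition penrose (k : nat) (G Gd : 'M[R]_k) : Prop :=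
  [/\ G *m Gd *m G = G, Gd *m G *m Gd = Gd,
      (G *m Gd)^T = G *m Gd & (Gd *m G)^T = Gd *m G].
Definition mp_pinv (k : nat) (G : 'M[R]_k) : 'M[R]_k :=
  match pselect (exists Gd, penrose G Gd) with
  | left h => projT1 (cid h)
  | right _ => 0
  end.

Definition gram (A : 'I_m -> 'M[R]_n) (p : nat) (Y : 'M[R]_(n, p)) : 'M[R]_m :=
  \matrix_(i, j) frob (A i *m Y) (A j *m Y).
Definition mu A (C : 'M[R]_n) (p : nat) (Y : 'M[R]_(n, p)) : 'cV[R]_m :=
  mp_pinv (gram A Y) *m Aop A (C *m Y *m Y^T).
Definition Smat A (C : 'M[R]_n) (p : nat) (Y : 'M[R]_(n, p)) : 'M[R]_n :=
  C - Aadj A (mu A C Y).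

Definition tangent (A : 'I_m -> 'M[R]_n) (p : nat) (Y : 'M[R]_(n, p)) :
  set 'M[R]_(n, p) := [set Yd | forall i, frob (A i *m Y) Yd = 0].

Definition second_order_critical A (C : 'M[R]_n) (p : nat) (Y : 'M[R]_(n, p)) :=
  Smat A C Y *m Y = 0 /\
  forall Yd, tangent A Y Yd -> 0 <= frob Yd (Smat A C Y *m Yd).

Definition span_dim (A : 'I_m -> 'M[R]_n) (p : nat) (Y : 'M[R]_(n, p)) : nat :=
  \rank (\matrix_(i < m) mxvec (A i *m Y)).

Definition assumption1 (A : 'I_m -> 'M[R]_n) (b : 'cV[R]_m) (p : nat) : Prop :=
  (forall Y, @Mp A b p Y ->
     forall nu : 'I_m -> R, \sum_i nu i *: (A i *m Y) = 0 -> forall i, nu i = 0)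
  \/
  (exists (U : set 'M[R]_(n, p)) (r : nat),
     open U /\ @Mp A b p `<=` U /\ forall Y, U Y -> span_dim A Y = r).

End BM.

Arguments Mp {R n m} A b p _.

From HB Require Import structures.
From mathcomp Require Import all_boot all_order all_algebra.
From mathcomp Require Import all_classical all_reals all_analysis.
From mathcomp Require Import ring.
Import Order.TTheory GRing.Theory Num.Theory.
Set Implicit Arguments. Unset Strict Implicit. Unset Printing Implicit Defensive.
Local Open Scope ring_scope.

(* S = C - A^*(mu) is a dual certificate for Y Y^T.  Second-order criticality
   makes S positive semidefinite: if Y has full row rank, S Y = 0 forces S = 0;
   otherwise, since p >= n, some row w <> 0 has w Y^T = 0, every u w is then a
   tangent direction, and <u w, S u w> = |w|^2 u^T S u.  For feasible X,
   <C, X> - <C, Y Y^T> = <S, X> - <S Y, Y> = tr (S^T X) >= 0, as the trace of a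
   product of psd matrices is nonnegative (peel rank-one terms off X by
   successive Schur complements).  Optimality for (P) follows because
   Y' |-> Y' Y'^T maps M_p into the feasible set of (SDP). *)

Section PsdForms.
Variables (R : realFieldType) (n : nat).
Implicit Types (X S : 'M[R]_n) (u v w c : 'cV[R]_n).

Definition bform X u v : R := (u^T *m X *m v) 0 0.

Definition psd_form X : Prop := forall u, 0 <= bform X u u.

Lemma bform_tr X u v : bform X^T u v = bform X v u.
Proof.
rewrite /bform.
have -> : u^T *m X^T *m v = (v^T *m X *m u)^T by rewrite !trmx_mul trmxK mulmxA.
by rewrite mxE.
Qed.

Lemma bform_sym X u v : X^T = X -> bform X u v = bform X v u.
Proof. by move=> sX; rewrite -bform_tr sX. Qed.

Lemma psd_form_tr S : psd_form S -> psd_form S^T.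
Proof. by move=> hS u; rewrite bform_tr. Qed.

Lemma bform_delta X i j : bform X (delta_mx i 0) (delta_mx j 0) = X i j.
Proof. by rewrite /bform trmx_delta -rowE -colE !mxE. Qed.

Lemma bform_col X u e : bform X u (delta_mx e 0) = (u^T *m col e X) 0 0.
Proof. by rewrite /bform -mulmxA -colE. Qed.

Lemma bformB X S u v : bform (X - S) u v = bform X u v - bform S u v.
Proof. by rewrite /bform mulmxBr mulmxBl !mxE. Qed.

Lemma bformZ a X u v : bform (a *: X) u v = a * bform X u v.
Proof. by rewrite /bform -scalemxAr -scalemxAl mxE. Qed.

Lemma bform_quadratic X u v t :
  bform X (u + t *: v) (u + t *: v) =
  bform X u u + t * bform X u v + t * bform X v u + t ^+ 2 * bform X v v.
Proof.
rewrite /bform !linearD !linearZ /= !mulmxDl -!scalemxAl !mxE; ring.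
Qed.

Lemma bform_outer c u : bform (c *m c^T) u u = (u^T *m c) 0 0 ^+ 2.
Proof.
rewrite /bform !mulmxA -(mulmxA _ c^T) [in LHS]mxE big_ord1 expr2.
have -> : c^T *m u = (u^T *m c)^T by rewrite trmx_mul trmxK.
by rewrite [_^T 0 0]mxE.
Qed.

Lemma mulmx_tr_row_ge0 q (w : 'rV[R]_q) : 0 <= (w *m w^T) 0 0.
Proof. by rewrite mxE; apply: sumr_ge0 => i _; rewrite mxE -expr2 sqr_ge0. Qed.

Lemma mulmx_tr_row_gt0 q (w : 'rV[R]_q) : w != 0 -> 0 < (w *m w^T) 0 0.
Proof.
rewrite lt_def mulmx_tr_row_ge0 andbT; apply: contraNN; rewrite mxE.
have sq_ge0 i : true -> 0 <= w 0 i * w^T i 0 by rewrite mxE -expr2 sqr_ge0.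
move=> /eqP /(psumr_eq0P sq_ge0) w2_eq0; apply/eqP/rowP => i.
by have /eqP := w2_eq0 i isT; rewrite mxE mulf_eq0 orbb => /eqP ->; rewrite mxE.
Qed.

Lemma psd_form_mulmx_tr p (M : 'M[R]_(n, p)) : psd_form (M *m M^T).
Proof.
move=> v; rewrite /bform.
have -> : v^T *m (M *m M^T) *m v = (v^T *m M) *m (v^T *m M)^T.
  by rewrite trmx_mul trmxK !mulmxA.
exact: mulmx_tr_row_ge0.
Qed.

Lemma mxtrace_mul_outer S c : \tr (S *m (c *m c^T)) = bform S c c.
Proof. by rewrite mulmxA mxtrace_mulC mulmxA /mxtrace big_ord1. Qed.

Lemma psd_diag_eq0_col X e i :
  X^T = X -> psd_form X -> X e e = 0 -> X i e = 0.
Proof.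
move=> sX pX Xee; apply/eqP; apply: contraT => Xie.
(* along e_i + t e_e the form is affine in t, hence negative somewhere *)
have Xei : X e i = X i e by rewrite -{1}sX mxE.
pose t := - (X i i + 1) / (2 * X i e).
have := pX (delta_mx i 0 + t *: delta_mx e 0).
rewrite bform_quadratic !bform_delta Xee Xei.
suff -> : X i i + t * X i e + t * X i e + t ^+ 2 * 0 = -1 by rewrite ler0N1.
by rewrite /t; field.
Qed.

Lemma psd_schur X e : X^T = X -> psd_form X -> 0 < X e e ->
  psd_form (X - (X e e)^-1 *: (col e X *m (col e X)^T)).
Proof.
move=> sX pX Xee w; rewrite bformB bformZ bform_outer.
set s := (w^T *m col e X) 0 0.
have := pX (w + (- s / X e e) *: delta_mx e 0).
rewrite bform_quadratic bform_delta (bform_sym (delta_mx e 0) w sX) bform_col -/s.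
suff -> : bform X w w + - s / X e e * s + - s / X e e * s + (- s / X e e) ^+ 2 * X e e
        = bform X w w - (X e e)^-1 * s ^+ 2 by [].
by field; rewrite lt0r_neq0.
Qed.

Lemma psd_outer_decomposition_bounded k X : (k <= n)%N -> X^T = X -> psd_form X ->
  (forall i j : 'I_n, (k <= j)%N -> X i j = 0) ->
  exists2 s : seq (R * 'cV[R]_n), all (fun a => 0 <= a.1) s &
    X = \sum_(a <- s) a.1 *: (a.2 *m a.2^T).
Proof.
elim: k X => [|k IH] X kn sX pX supp.
  by exists [::] => //; apply/matrixP=> i j; rewrite big_nil mxE supp.
pose e := Ordinal kn.
have split_col (j : 'I_n) : (k <= j)%N -> j = e \/ (k < j)%N.
  by rewrite leq_eqVlt => /predU1P [kj|]; [left; apply: val_inj|right].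
have Xsym i j : X j i = X i j by rewrite -{1}sX mxE.
have [Xee0|Xee_neq0] := eqVneq (X e e) 0.
  apply: IH => //; first exact: ltnW.
  by move=> i j /split_col [->|]; [exact: psd_diag_eq0_col | exact: supp].
set d := X e e in Xee_neq0.
have d_gt0 : 0 < d by rewrite lt_def Xee_neq0 /d -bform_delta pX.
set c := col e X.
have [s s_ge0 X'_sum] :
    exists2 s : seq (R * 'cV[R]_n), all (fun a => 0 <= a.1) s &
      X - d^-1 *: (c *m c^T) = \sum_(a <- s) a.1 *: (a.2 *m a.2^T).
  apply: IH; first exact: ltnW.
  - by rewrite linearB linearZ /= trmx_mul trmxK sX.
  - exact: psd_schur.
  - move=> i j /split_col [->|kj]; rewrite !mxE big_ord1 !mxE.
      by rewrite -/d; field; rewrite lt0r_neq0.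
    by rewrite (Xsym e j) (supp e j kj) (supp i j kj) mulr0 mulr0 subr0.
exists ((d^-1, c) :: s); first by rewrite /= invr_ge0 ltW.
by rewrite big_cons -X'_sum addrC subrK.
Qed.

Lemma psd_outer_decomposition X : X^T = X -> psd_form X ->
  exists2 s : seq (R * 'cV[R]_n), all (fun a => 0 <= a.1) s &
    X = \sum_(a <- s) a.1 *: (a.2 *m a.2^T).
Proof.
move=> sX pX; apply: (@psd_outer_decomposition_bounded n) => // i j.
by rewrite leqNgt ltn_ord.
Qed.

Lemma mxtrace_mul_psd_ge0 S X :
  psd_form S -> X^T = X -> psd_form X -> 0 <= \tr (S *m X).
Proof.
move=> pS sX pX; have [s s_ge0 ->] := psd_outer_decomposition sX pX.
rewrite mulmx_sumr linear_sum big_seq; apply: sumr_ge0 => a /(allP s_ge0) a_ge0.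
by rewrite -scalemxAr linearZ /= mxtrace_mul_outer mulr_ge0.
Qed.

End PsdForms.

Section Frobenius.
Variables (R : realType) (n : nat).

Lemma frobB q (U V W : 'M[R]_(n, q)) : frob (U - V) W = frob U W - frob V W.
Proof. by rewrite /frob linearB mulmxBl linearB. Qed.

Lemma frob_mulmx_outer p (D : 'M[R]_n) (Y : 'M[R]_(n, p)) :
  frob (D *m Y) Y = frob D (Y *m Y^T).
Proof. by rewrite /frob trmx_mul mulmxA [RHS]mxtrace_mulC mulmxA. Qed.

Lemma frob_psd_ge0 (S X : 'M[R]_n) : psd_form S -> psdmx X -> 0 <= frob S X.
Proof. by move=> pS [sX pX]; apply: mxtrace_mul_psd_ge0 (psd_form_tr pS) sX pX. Qed.

Lemma frob_rank_one p (S : 'M[R]_n) (u : 'cV[R]_n) (w : 'rV[R]_p) :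
  frob (u *m w) (S *m (u *m w)) = (w *m w^T) 0 0 * bform S u u.
Proof.
rewrite /frob trmx_mul !mulmxA mxtrace_mulC !mulmxA /mxtrace big_ord1.
have -> : w *m w^T *m u^T *m S *m u = (w *m w^T) *m (u^T *m S *m u) by rewrite !mulmxA.
by rewrite mxE big_ord1.
Qed.

End Frobenius.

Lemma exists_row_mulmx_eq0 (F : fieldType) q k (M : 'M[F]_(q, k)) :
  (\rank M < q)%N -> exists2 w : 'rV[F]_q, w != 0 & w *m M = 0.
Proof.
move=> rM; have : kermx M != 0 by rewrite -mxrank_eq0 mxrank_ker subn_eq0 -ltnNge.
by case/rowV0Pn => w /sub_kermxP wM w0; exists w.
Qed.

Section BurerMonteiro.
Variables (R : realType) (n m : nat).
Variables (A : 'I_m -> 'M[R]_n) (b : 'cV[R]_m) (C : 'M[R]_n).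

Lemma frob_Aadj nu X : Aop A X = b -> frob (Aadj A nu) X = \sum_i nu i 0 * b i 0.
Proof.
move=> AX; rewrite /frob /Aadj !linear_sum mulmx_suml linear_sum; apply: eq_bigr => i _.
by rewrite linearZ -scalemxAl linearZ /= -AX mxE.
Qed.

Lemma outer_sdp_feasible p (Y : 'M[R]_(n, p)) : Mp A b p Y -> sdp_feasible A b (Y *m Y^T).
Proof.
move=> MY; have sYY : symmx (Y *m Y^T) by rewrite /symmx trmx_mul trmxK.
by split; [|split; [|split]] => //; apply: psd_form_mulmx_tr.
Qed.

Lemma sdp_optimal_certificate p nu (Y : 'M[R]_(n, p)) :
  Mp A b p Y -> psd_form (C - Aadj A nu) -> (C - Aadj A nu) *m Y = 0 ->
  sdp_optimal A b C (Y *m Y^T).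
Proof.
move=> MY pS SY; have fY := outer_sdp_feasible MY.
have frobC Z : Aop A Z = b -> frob C Z = frob (C - Aadj A nu) Z + \sum_i nu i 0 * b i 0.
  by move=> AZ; rewrite frobB frob_Aadj // subrK.
split=> // X [_ [AX pX]]; rewrite !frobC //.
by rewrite -frob_mulmx_outer SY /frob trmx0 mul0mx mxtrace0 add0r lerDr frob_psd_ge0.
Qed.

Lemma P_optimal_of_sdp_optimal p (Y : 'M[R]_(n, p)) :
  Mp A b p Y -> sdp_optimal A b C (Y *m Y^T) -> P_optimal A b C Y.
Proof.
move=> MY [_ opt]; split=> // Y' MY'; rewrite !frob_mulmx_outer.
exact/opt/outer_sdp_feasible.
Qed.

Lemma tangent_rank_one p (Y : 'M[R]_(n, p)) (u : 'cV[R]_n) (w : 'rV[R]_p) :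
  w *m Y^T = 0 -> tangent A Y (u *m w).
Proof.
move=> wY i; rewrite /frob mulmxA mxtrace_mulC trmx_mul !mulmxA wY !mul0mx.
exact: mxtrace0.
Qed.

Lemma second_order_critical_psd p (Y : 'M[R]_(n, p)) :
  (n <= p)%N -> second_order_critical A C Y -> psd_form (Smat A C Y).
Proof.
move=> np [SY Stan] u.
have [rY|rY] := eqVneq (\rank Y) n.
  suff -> : Smat A C Y = 0 by rewrite /bform mulmx0 mul0mx mxE.
  by apply/eqP; rewrite -(mulmx_free_eq0 _ (_ : row_free Y)) ?SY // /row_free rY.
have [w w0 wY] : exists2 w : 'rV_p, w != 0 & w *m Y^T = 0.
  apply: exists_row_mulmx_eq0; rewrite mxrank_tr; apply: leq_trans np.
  by rewrite ltn_neqAle rY rank_leq_row.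
have := Stan _ (tangent_rank_one u wY).
by rewrite frob_rank_one pmulr_rge0 // mulmx_tr_row_gt0.
Qed.

End BurerMonteiro.

Theorem corollary2 (R : realType) (n m p : nat)
  (A : 'I_m -> 'M[R]_n) (b : 'cV[R]_m) (C : 'M[R]_n) :
  (forall i, symmx (A i)) -> symmx C ->
  (n <= p)%N -> assumption1 A b p ->
  forall Y : 'M[R]_(n, p),
    Mp A b p Y -> second_order_critical A C Y ->
    P_optimal A b C Y /\ sdp_optimal A b C (Y *m Y^T).
Proof.
(* Symmetry of the data and Assumption 1 only matter for the converse
   (first- and second-order necessary conditions), not for sufficiency. *)
move=> _ _ np _ Y MY crit.
have sdp_opt : sdp_optimal A b C (Y *m Y^T).
  exact: sdp_optimal_certificate MY (second_order_critical_psd np crit) crit.1.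
by split=> //; apply: P_optimal_of_sdp_optimal.
Qed.
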